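(* Let $A_1,\dots,A_n$ ($n\ge 3$) be distinct points of a difference cograph such that $\mathcal{C}(A_1,A_2)=\mathcal{C}(A_2,A_3)=\dots=\mathcal{C}(A_{n-1},A_n)$. If $n$ is odd then $A_1+A_n=2A_{(n+1)/2}$; if $n$ is even then $A_1+A_n=A_{n/2}+A_{n/2+1}$. (In particular, for a chain $A,B,C$ one has $A+C=2B$, and for a chain $A,B,C,D$ one has $A+D=B+C$.)
   Context: A difference cograph has as points distinct elements either of $\mathbb{Z}$, with edge $\mathcal{C}(P,Q)=|P-Q|$, or of $\mathbb{Z}_m$ for some $m$, with edge $\mathcal{C}(P,Q)=\min|p-q|$ taken over integers $p\in P$, $q\in Q$ (the cosets); sums of points are computed in $\mathbb{Z}$ or $\mathbb{Z}_m$ respectively. *)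

From mathcomp Require Import all_boot all_algebra.
Set Implicit Arguments. Unset Strict Implicit. Unset Printing Implicit Defensive.
Import GRing.Theory Num.Theory.
Local Open Scope ring_scope.

Definition cZ (P Q : int) : nat := `|P - Q|%N.

(* An integer p is a representative of the coset P of Z_m (used for 1 < m). *)
Definition zm_rep (m : nat) (P : 'Z_m) (p : int) : bool :=
  (p %% m%:Z)%Z == (val P)%:Z.

(* Difference cograph on Z_m: C(P,Q) = d means d is the minimum of |p - q|
   over integers p in P, q in Q. *)
Definition cZm_is (m : nat) (P Q : 'Z_m) (d : nat) : Prop :=
  (exists p q : int, zm_rep P p /\ zm_rep Q q /\ `|p - q|%N = d) /\
  (forall p q : int, zm_rep P p -> zm_rep Q q -> (d <= `|p - q|%N)%N).

(* In both cographs an edge of length d joins points differing by d or -d,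
   so every step A (i+1) - A i of the chain is c or -c for a fixed c.  Two
   consecutive steps of opposite signs would give A (i+2) = A i, which
   distinctness forbids; hence all steps are equal, the chain is an arithmetic
   progression, and A i + A j = A k + A l whenever i + j = k + l. *)

From mathcomp Require Import all_boot all_algebra.
From mathcomp Require Import zify.
Import GRing.Theory Num.Theory.
Local Open Scope ring_scope.

Section SignedChain.
Variables (V : zmodType) (c : V).

Lemma signed_steps_eq (u v : V) :
  u = c \/ u = - c -> v = c \/ v = - c -> u + v != 0 -> u = v.
Proof. by case=> ->; case=> ->; rewrite ?subrr ?addNr ?eqxx. Qed.

Variables (n : nat) (A : nat -> V).

Hypothesis A_inj :
  forall i j : nat, (1 <= i <= n)%N -> (1 <= j <= n)%N -> A i = A j -> i = j.
Hypothesis A_step :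
  forall i : nat, (1 <= i < n)%N -> A i.+1 - A i = c \/ A i.+1 - A i = - c.

Lemma chain_step_const (i : nat) :
  (1 <= i < n)%N -> A i.+1 - A i = A 2%N - A 1%N.
Proof.
elim: i => [|[|i] IH] hi //; rewrite -IH; last by lia.
apply: signed_steps_eq; try (apply: A_step; lia).
rewrite addrA subrK subr_eq0; apply/eqP => /A_inj; lia.
Qed.

Lemma chain_arith_prog (i : nat) :
  (i < n)%N -> A i.+1 = A 1%N + (A 2%N - A 1%N) *+ i.
Proof.
elim: i => [|i IH] hi; first by rewrite addr0.
rewrite mulrS addrCA -IH; last by lia.
by rewrite -(@chain_step_const i.+1) ?subrK //; lia.
Qed.

Lemma chain_sum_eq (i j k l : nat) :
  (1 <= i <= n)%N -> (1 <= j <= n)%N -> (1 <= k <= n)%N -> (1 <= l <= n)%N ->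
  (i + j = k + l)%N -> A i + A j = A k + A l.
Proof.
case: i j k l => [|i] [|j] [|k] [|l] //= hi hj hk hl hijkl.
(* [A 1] is itself an instance of [A _.+1], so [rewrite !chain_arith_prog] would loop. *)
rewrite [A i.+1]chain_arith_prog 1?[A j.+1]chain_arith_prog
        1?[A k.+1]chain_arith_prog 1?[A l.+1]chain_arith_prog; try lia.
by rewrite addrACA [RHS]addrACA -!mulrnDr; congr (_ + _ *+ _); lia.
Qed.

Lemma chain_ends_sum :
  (3 <= n)%N ->
  (odd n -> A 1%N + A n = A (n.+1 %/ 2)%N *+ 2) /\
  (~~ odd n -> A 1%N + A n = A (n %/ 2)%N + A (n %/ 2).+1).
Proof.
move=> n_ge3; split=> n_odd; rewrite ?mulr2n; apply: chain_sum_eq; lia.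
Qed.

End SignedChain.

Lemma cZ_step (P Q : int) (d : nat) :
  cZ P Q = d -> Q - P = d%:Z \/ Q - P = - d%:Z.
Proof. rewrite /cZ; lia. Qed.

Lemma zm_rep_intr {m : nat} {P : 'Z_m} {p : int} :
  (1 < m)%N -> zm_rep P p -> P = p%:~R.
Proof.
move=> m_gt1 /eqP p_mod.
have m_eq0 : (m%:~R : 'Z_m) = 0 by exact: pchar_Zp.
rewrite [p](divz_eq p m) p_mod intrD intrM m_eq0 mulr0 add0r.
apply: val_inj; rewrite /= val_Zp_nat // modn_small //.
by rewrite -[X in (_ < X)%N]Zp_cast.
Qed.

Lemma cZm_step (m : nat) (P Q : 'Z_m) (d : nat) :
  (1 < m)%N -> cZm_is P Q d -> Q - P = d%:R \/ Q - P = - d%:R.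
Proof.
move=> m_gt1 [[p [q [p_rep [q_rep pq_dist]]]] _].
rewrite (zm_rep_intr m_gt1 p_rep) (zm_rep_intr m_gt1 q_rep) -intrB.
have [->|->] : q - p = d%:Z \/ q - p = - d%:Z by lia.
  by left.
by right; rewrite intrN.
Qed.

Theorem lemma3p2 :
  (forall (n : nat) (A : nat -> int),
    (3 <= n)%N ->
    (forall i j : nat, (1 <= i <= n)%N -> (1 <= j <= n)%N -> A i = A j -> i = j) ->
    (exists d : nat, forall i : nat, (1 <= i < n)%N -> cZ (A i) (A i.+1) = d) ->
    (odd n -> A 1%N + A n = A (n.+1 %/ 2)%N *+ 2) /\
    (~~ odd n -> A 1%N + A n = A (n %/ 2)%N + A (n %/ 2).+1)) /\
  (forall (m n : nat) (A : nat -> 'Z_m),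
    (1 < m)%N ->
    (3 <= n)%N ->
    (forall i j : nat, (1 <= i <= n)%N -> (1 <= j <= n)%N -> A i = A j -> i = j) ->
    (exists d : nat, forall i : nat, (1 <= i < n)%N -> cZm_is (A i) (A i.+1) d) ->
    (odd n -> A 1%N + A n = A (n.+1 %/ 2)%N *+ 2) /\
    (~~ odd n -> A 1%N + A n = A (n %/ 2)%N + A (n %/ 2).+1)).
Proof.
split.
- move=> n A n_ge3 A_inj [d A_dist].
  apply: (@chain_ends_sum _ d%:Z n A) => // i hi.
  by apply: cZ_step; apply: A_dist.
- move=> m n A m_gt1 n_ge3 A_inj [d A_dist].
  apply: (@chain_ends_sum _ d%:R n A) => // i hi.
  by apply: cZm_step => //; apply: A_dist.
Qed.
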